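(* Let $G$ be a finite simple connected graph and let $\sigma$ be a position of the parallel chip-firing game on $G$ with period $p(\sigma)>1$. Then there exists $T\ge 0$ such that for all $t\ge T$ and all vertices $v\in V(G)$, $U^t\sigma(v)\le 2\deg(v)-1$.
   Context: Parallel chip-firing game: on a finite simple connected graph $G$, a position $\sigma$ assigns a nonnegative integer $\sigma(v)$ (number of chips) to each vertex $v$. In one step, every vertex $v$ with $\sigma(v)\ge \deg(v)$ (a ''firing'' vertex) simultaneously sends one chip to each neighbor; other vertices do not send chips. Writing $\Phi_\sigma(v)$ for the number of neighbors $w$ of $v$ with $\sigma(w)\ge\deg(w)$, the step operator $U$ is given by $U\sigma(v)=\sigma(v)+\Phi_\sigma(v)$ if $\sigma(v)\le \deg(v)-1$ and $U\sigma(v)=\sigma(v)+\Phi_\sigma(v)-\deg(v)$ if $\sigma(v)\ge\deg(v)$. $U^0\sigma=\sigma$, $U^m\sigma=U(U^{m-1}\sigma)$. The period $p(\sigma)$ is the least positive integer $p$ such that $U^{t+p}\sigma=U^t\sigma$ for all sufficiently large $t$. *)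

From mathcomp Require Import all_boot.
Set Implicit Arguments. Unset Strict Implicit. Unset Printing Implicit Defensive.

Definition simple_graph (V : finType) (e : rel V) : Prop :=
  symmetric e /\ irreflexive e.

Definition connected_graph (V : finType) (e : rel V) : Prop :=
  forall x y : V, connect e x y.

Definition deg (V : finType) (e : rel V) (v : V) : nat := #|[set w | e v w]|.

Definition fires (V : finType) (e : rel V) (s : V -> nat) (v : V) : bool :=
  deg e v <= s v.

Definition Phi (V : finType) (e : rel V) (s : V -> nat) (v : V) : nat :=
  #|[set w | e v w & fires e s w]|.

Definition U (V : finType) (e : rel V) (s : V -> nat) : V -> nat :=
  fun v => if ~~ fires e s v then s v + Phi e s v
           else s v + Phi e s v - deg e v.

Definition Uiter (V : finType) (e : rel V) (m : nat) (s : V -> nat) : V -> nat :=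
  iter m (U e) s.

Definition is_period (V : finType) (e : rel V) (s : V -> nat) (p : nat) : Prop :=
  0 < p /\ exists T0, forall t, T0 <= t -> Uiter e (t + p) s = Uiter e t s.

Definition least_period (V : finType) (e : rel V) (s : V -> nat) (p : nat) : Prop :=
  is_period e s p /\ forall q, is_period e s q -> p <= q.

From Stdlib Require Import Classical FunctionalExtensionality.
From mathcomp Require Import all_boot zify.

(* A vertex that ever holds fewer than [deg v] chips holds fewer than
   [2 deg v] ever after, since it gains at most [deg v] chips per step and
   loses [deg v] whenever it fires.  If instead some vertex fires forever,
   then after the preperiod its chip count is nonincreasing, hence constant
   by periodicity, so all its neighbours fire as well; by connectivity every
   vertex fires at every step, each step is the identity, and the period
   is 1. *)

Set Implicit Arguments.
Unset Strict Implicit.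
Unset Printing Implicit Defensive.

Lemma eventually_forall_fin (V : finType) (Q : V -> nat -> Prop) :
  (forall v, exists T, forall t, T <= t -> Q v t) ->
  exists T, forall t, T <= t -> forall v, Q v t.
Proof.
move=> HQ.
suff [T HT] : exists T, forall t, T <= t -> forall v, v \in enum V -> Q v t.
  by exists T => t Ht v; apply: HT; rewrite ?mem_enum.
elim: (enum V) => [|a l [T IH]]; first by exists 0.
have [Ta HTa] := HQ a.
exists (maxn T Ta) => t; rewrite geq_max => /andP[HT HTa_t] v.
by rewrite inE => /orP[/eqP-> | /IH]; [exact: HTa | exact].
Qed.

Section ChipFiring.

Variables (V : finType) (e : rel V).

Lemma Phi_le_deg (s : V -> nat) v : Phi e s v <= deg e v.
Proof. by apply: subset_leq_card; apply/subsetP => w; rewrite !inE => /andP[]. Qed.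

Lemma Phi_eq_deg_fires (s : V -> nat) u w :
  Phi e s u = deg e u -> e u w -> fires e s w.
Proof.
move=> HPhi euw.
have sub : [set w0 | e u w0 & fires e s w0] \subset [set w0 | e u w0].
  by apply/subsetP => x; rewrite !inE => /andP[].
have /(_ w) := subset_cardP HPhi sub.
by rewrite !inE euw.
Qed.

Lemma UiterS (s : V -> nat) t : Uiter e t.+1 s = U e (Uiter e t s).
Proof. exact: iterS. Qed.

Lemma U_lt_2deg (s : V -> nat) v :
  ~~ fires e s v \/ s v < 2 * deg e v -> U e s v < 2 * deg e v.
Proof.
have := Phi_le_deg s v; rewrite /U /fires.
by case: (leqP (deg e v) (s v)) => Hs HPhi /= [] //; lia.
Qed.

Lemma U_le_firing (s : V -> nat) v : fires e s v -> U e s v <= s v.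
Proof. by rewrite /U => Hf; rewrite Hf /=; move: Hf (Phi_le_deg s v); rewrite /fires; lia. Qed.

Lemma U_lt_firing (s : V -> nat) v :
  fires e s v -> Phi e s v < deg e v -> U e s v < s v.
Proof. by rewrite /U => Hf; rewrite Hf /=; move: Hf; rewrite /fires; lia. Qed.

Lemma U_all_firing (s : V -> nat) : (forall w, fires e s w) -> U e s = s.
Proof.
move=> Hall; apply: functional_extensionality => w.
rewrite /U Hall /=.
have -> : Phi e s w = deg e w by apply: eq_card => x; rewrite !inE Hall andbT.
exact: addnK.
Qed.

Lemma Uiter_lt_2deg_after_rest (s : V -> nat) v t0 t :
  ~~ fires e (Uiter e t0 s) v -> t0 < t -> Uiter e t s v < 2 * deg e v.
Proof.
move=> Hrest; elim: t => // t IH; rewrite ltnS leq_eqVlt => /orP[/eqP <- | Ht].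
  by rewrite UiterS; apply: U_lt_2deg; left.
by rewrite UiterS; apply: U_lt_2deg; right; apply: IH.
Qed.

Section Periodic.

Variables (s : V -> nat) (p T0 : nat).
Hypothesis p_gt0 : 0 < p.
Hypothesis periodic : forall t, T0 <= t -> Uiter e (t + p) s = Uiter e t s.

Definition fires_after (u : V) := forall t, T0 <= t -> fires e (Uiter e t s) u.

Lemma fires_after_Phi_eq_deg u t :
  fires_after u -> T0 <= t -> Phi e (Uiter e t s) u = deg e u.
Proof.
move=> Hu Ht; apply/eqP; rewrite eqn_leq Phi_le_deg leqNgt /=; apply/negP => Hlt.
have decr : Uiter e t.+1 s u < Uiter e t s u.
  by rewrite UiterS; apply: U_lt_firing => //; apply: Hu.
have nonincr m : Uiter e (t.+1 + m) s u <= Uiter e t.+1 s u.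
  elim: m => [|m IH]; first by rewrite addn0.
  apply: leq_trans IH; rewrite addnS UiterS; apply: U_le_firing; apply: Hu.
  by move: Ht; lia.
have := nonincr p.-1; rewrite addSnnS prednK // periodic //.
by rewrite leqNgt decr.
Qed.

Lemma fires_after_edge u w : fires_after u -> e u w -> fires_after w.
Proof.
move=> Hu euw t Ht.
exact: Phi_eq_deg_fires (fires_after_Phi_eq_deg Hu Ht) euw.
Qed.

Lemma fires_after_connect u w : fires_after u -> connect e u w -> fires_after w.
Proof.
move=> Hu /connectP[q]; elim: q u Hu => [|a q IH] u Hu /=; first by move=> _ ->.
by case/andP=> eua Hq; apply: IH; first exact: fires_after_edge eua.
Qed.

Lemma fires_after_period1 u :
  connected_graph e -> fires_after u -> is_period e s 1.
Proof.
move=> conn Hu; split=> //; exists T0 => t Ht.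
rewrite addn1 UiterS; apply: U_all_firing => w.
exact: fires_after_connect Hu (conn u w) t Ht.
Qed.

End Periodic.

End ChipFiring.

Theorem lemma2p1 (V : finType) (e : rel V) (s : V -> nat) (p : nat) :
  simple_graph e -> connected_graph e ->
  least_period e s p -> 1 < p ->
  exists T0, forall t, T0 <= t -> forall v : V,
    Uiter e t s v <= 2 * deg e v - 1.
Proof.
move=> _ conn [[p_gt0 [T0 periodic]] p_least] p_gt1.
apply: eventually_forall_fin => v.
have [[t0 Hrest] | never_rests] := classic (exists t0, ~~ fires e (Uiter e t0 s) v).
  exists t0.+1 => t Ht.
  by have := Uiter_lt_2deg_after_rest Hrest Ht; lia.
have Hv : fires_after e s T0 v.
  by move=> t _; apply: NNPP => /negP Hrest; apply: never_rests; exists t.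
have := p_least 1 (fires_after_period1 p_gt0 periodic conn Hv).
by rewrite leqNgt p_gt1.
Qed.
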